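(* Let $i:B\to A$ be a $k$-linear $X$-functor from a diagonal $k$-linear category $B$ to a $k$-linear category $A$, and assume that $A_{xy}$ is flat as a left $B_x$-module for all $x,y\in X$. Then the following are equivalent: (1) $A_{xx}$ is faithfully flat as a left $B_x$-module for every $x\in X$; (2) the adjoint pair $(F,G)$ between $\mathcal{D}_k(X)_B$ and $\underline{\rm Desc}_B(A)$ is a pair of inverse equivalences, where $F(N)_{xy}=N_x\otimes_{B_x}A_{xy}$ with $\sigma_{xy}(n\otimes_{B_x}a)=n\otimes_{B_x}1_x\otimes_{B_x}a$ and $G(M,\sigma)_x=\{m\in M_{xx}\mid\sigma_{xx}(m)=m\otimes_{B_x}1_x\}$ (unit $n\mapsto n\otimes_{B_x}1_x$, counit $m\otimes_{B_x}a\mapsto ma$).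
   Context: Let $k$ be a commutative ring; unadorned $\otimes$ is over $k$. A $k$-linear category $A$ with class of objects $X$ consists of $k$-modules $A_{xy}$, associative compositions $A_{xy}\otimes A_{yz}\to A_{xz}$, $a\otimes b\mapsto ab$, and units $1_x\in A_{xx}$. A right $A$-module is a family $(M_{xy})$ with maps $M_{xy}\otimes A_{yz}\to M_{xz}$, associative and unital. A diagonal $k$-linear category $B$ is a family of $k$-algebras $(B_x)_{x\in X}$. $\mathcal{D}_k(X)_B$ is the category of families $N=(N_x)$ with $N_x$ a right $B_x$-module (morphisms: families of $B_x$-linear maps). A $k$-linear $X$-functor $i:B\to A$ amounts to $k$-algebra morphisms $i_x:B_x\to A_{xx}$, making $A_{xy}$ a $B_x$-$B_y$-bimodule. A descent datum $(M,\sigma)$ for $i$ is a right $A$-module $M$ with $k$-linear maps $\sigma_{xy}:M_{xy}\to M_{xx}\otimes_{B_x}A_{xy}$, $\sigma_{xy}(m)=m_{<0>}\otimes_{B_x}m_{<1>}$, such that for all $m\in M_{xy}$, $a\in A_{yz}$: (i) $\sigma_{xz}(ma)=m_{<0>}\otimes_{B_x}m_{<1>}a$; (ii) $\sigma_{xx}(m_{<0>})\otimes_{B_x}m_{<1>}=m_{<0>}\otimes_{B_x}1_x\otimes_{B_x}m_{<1>}$; (iii) $m_{<0>}m_{<1>}=m$. A morphism of descent data $f:(M,\sigma)\to(M',\sigma')$ is a morphism of right $A$-modules with $f_{xx}(m_{<0>})\otimes_{B_x}m_{<1>}=\sigma'_{xy}(f_{xy}(m))$. $\underline{\rm Desc}_B(A)$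 is the category of descent data. $F$ and $G$ act on morphisms by $F(g)_{xy}=g_x\otimes_{B_x}A_{xy}$ and $G(f)_x=f_{xx}$ restricted. *)

(* MathComp has no tensor products of modules over noncommutative rings, so we
   build N (x)_R L here as the quotient of formal sums (lists of pairs) by the
   congruence generated by the usual bilinearity / balancing relations.
   The quotient is realised classically (classes = predicates on lists), so
   that every operation below is a plain definition (no proof obligations). *)
From HB Require Import structures.
From mathcomp Require Import all_boot all_algebra.
From Stdlib Require Import ClassicalEpsilon Permutation.
Set Implicit Arguments. Unset Strict Implicit. Unset Printing Implicit Defensive.
Import GRing.Theory.
Local Open Scope ring_scope.

Section Defs.
Variable k : comPzRingType.

Record rawmod := RawMod {
  rcar :> Type;
  radd : rcar -> rcar -> rcar;
  rzero : rcar;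
  rscale : k -> rcar -> rcar }.

Definition of_lmod (V : lmodType k) : rawmod :=
  @RawMod (V : Type) (@GRing.add V) (0 : V) (@GRing.scale k V).

Definition klinear (U V : lmodType k) (f : U -> V) : Prop :=
  forall (c : k) (u v : U), f (c *: u + v) = c *: f u + f v.

Record kalg := KAlg {
  acar :> lmodType k;
  amul : acar -> acar -> acar;
  aone : acar;
  amulA : forall a b c, amul a (amul b c) = amul (amul a b) c;
  amul1l : forall a, amul aone a = a;
  amul1r : forall a, amul a aone = a;
  amul_linl : forall b, klinear (fun a => amul a b);
  amul_linr : forall a, klinear (amul a) }.

Record kcat (X : Type) := KCat {
  Hom : X -> X -> lmodType k;
  comp : forall x y z, Hom x y -> Hom y z -> Hom x z;
  idm : forall x, Hom x x;
  compA : forall x y z w (a : Hom x y) (b : Hom y z) (c : Hom z w),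
      comp a (comp b c) = comp (comp a b) c;
  comp1l : forall x y (a : Hom x y), comp (idm x) a = a;
  comp1r : forall x y (a : Hom x y), comp a (idm y) = a;
  comp_linl : forall x y z (b : Hom y z), klinear (fun a : Hom x y => comp a b);
  comp_linr : forall x y z (a : Hom x y), klinear (fun b : Hom y z => comp a b) }.
Arguments comp {X} _ {x y z}.
Arguments idm {X} _ x.
Arguments Hom {X} _ x y.

(* a diagonal k-linear category B is a family (B x)_{x in X} of k-algebras;
   a k-linear X-functor i : B -> A is a family of algebra maps B_x -> A_xx *)
Record kXfunctor (X : Type) (B : X -> kalg) (A : kcat X) := KXFunctor {
  ifun : forall x, B x -> Hom A x x;
  ifun_lin : forall x, klinear (@ifun x);
  ifun_mul : forall x (a b : B x), @ifun x (amul a b) = comp A (@ifun x a) (@ifun x b);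
  ifun_one : forall x, @ifun x (aone (B x)) = idm A x }.
Arguments ifun {X B A} _ x.

(* right modules over a k-algebra (objects N_x of D_k(X)_B) *)
Record rmodule (R : kalg) := RModule {
  rmc :> lmodType k;
  rma : rmc -> R -> rmc;
  rma_linl : forall r, klinear (fun m => rma m r);
  rma_linr : forall m, klinear (rma m);
  rmaA : forall m r s, rma (rma m r) s = rma m (amul r s);
  rma1 : forall m, rma m (aone R) = m }.
Arguments rma {R} _.

Definition rmod_hom (R : kalg) (N N' : rmodule R) (f : N -> N') : Prop :=
  klinear f /\ forall n r, f (rma N n r) = rma N' (f n) r.

Record rAmodule (X : Type) (A : kcat X) := RAModule {
  Mc : X -> X -> lmodType k;
  Ma : forall x y z, Mc x y -> Hom A y z -> Mc x z;
  Ma_linl : forall x y z (a : Hom A y z), klinear (fun m : Mc x y => Ma m a);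
  Ma_linr : forall x y z (m : Mc x y), klinear (fun a : Hom A y z => Ma m a);
  MaA : forall x y z w (m : Mc x y) (a : Hom A y z) (b : Hom A z w),
      Ma (Ma m a) b = Ma m (comp A a b);
  Ma1 : forall x y (m : Mc x y), Ma m (idm A y) = m }.
Arguments Mc {X A} _ x y.
Arguments Ma {X A} _ {x y z}.

(* Tensor products  N (x)_R L  of a right "R-module" N and a left       *)
(* "R-module" L; optionally restricted to the elements of N satisfying  *)
(* a predicate P (used for tensoring a submodule, e.g. G(M)_x).         *)
Record tdata := TData {
  tN : rawmod;
  tL : rawmod;
  tR : Type;
  tra : tN -> tR -> tN;
  tla : tR -> tL -> tL;
  tP : tN -> Prop }.

Section Tensor.
Variable D : tdata.
Local Notation N := (tN D).
Local Notation L := (tL D).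
Local Notation P := (@tP D).

Inductive tequiv : seq (N * L) -> seq (N * L) -> Prop :=
| te_refl s : tequiv s s
| te_sym s t : tequiv s t -> tequiv t s
| te_trans s t u : tequiv s t -> tequiv t u -> tequiv s u
| te_perm s t : Permutation s t -> tequiv s t
| te_cat s s' t t' : tequiv s s' -> tequiv t t' -> tequiv (s ++ t) (s' ++ t')
| te_addl n n' l : P n -> P n' ->
    tequiv [:: (radd n n', l)] [:: (n, l); (n', l)]
| te_addr n l l' : P n -> tequiv [:: (n, radd l l')] [:: (n, l); (n, l')]
| te_zerol l : P (rzero N) -> tequiv [:: (rzero N, l)] [::]
| te_zeror n : P n -> tequiv [:: (n, rzero L)] [::]
| te_bal n r l : P n -> P (@tra D n r) -> tequiv [:: (@tra D n r, l)] [:: (n, @tla D r l)].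

Definition tadm (s : seq (N * L)) : Prop := List.Forall (fun p => P p.1) s.

Definition tensor : Type :=
  {C : seq (N * L) -> Prop | exists s, tadm s /\ C = tequiv s}.

Definition tcls (s : seq (N * L)) : tensor :=
  match excluded_middle_informative (tadm s) with
  | left h => exist _ (tequiv s) (ex_intro _ s (conj h erefl))
  | right _ => exist _ (tequiv [::])
                 (ex_intro _ [::] (conj (List.Forall_nil _) erefl))
  end.

Definition trep (t : tensor) : seq (N * L) :=
  proj1_sig (constructive_indefinite_description _ (proj2_sig t)).

Definition tmul (n : N) (l : L) : tensor := tcls [:: (n, l)].
Definition tadd (t u : tensor) : tensor := tcls (trep t ++ trep u).
Definition tzero : tensor := tcls [::].
Definition tscale (c : k) (t : tensor) : tensor :=
  tcls (map (fun p => (rscale c p.1, p.2)) (trep t)).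

Definition tensor_raw : rawmod := @RawMod tensor tadd tzero tscale.

(* the additive map N (x) L -> Z induced by a balanced biadditive phi *)
Definition tlift (Z : rawmod) (phi : N -> L -> Z) (t : tensor) : Z :=
  foldr (fun p z => radd (phi p.1 p.2) z) (rzero Z) (trep t).

Definition tract (S : Type) (rho : L -> S -> L) (t : tensor) (s : S) : tensor :=
  tcls (map (fun p => (p.1, rho p.2 s)) (trep t)).
End Tensor.
Arguments tcls : clear implicits.

Definition tmap (D D' : tdata) (f : tN D -> tN D') (g : tL D -> tL D')
    (t : tensor D) : tensor D' :=
  tcls D' (map (fun p => (f p.1, g p.2)) (trep t)).

Definition exact3 (U V W : rawmod) (f : U -> V) (g : V -> W) : Prop :=
  forall v, g v = rzero W <-> exists u, f u = v.

Definition tdRL (R : kalg) (N : rmodule R) (L : lmodType k) (la : R -> L -> L)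
  : tdata := @TData (of_lmod N) (of_lmod L) R (rma N) la (fun _ => True).

Definition flat_left (R : kalg) (L : lmodType k) (la : R -> L -> L) : Prop :=
  forall (N1 N2 N3 : rmodule R) (f : N1 -> N2) (g : N2 -> N3),
    rmod_hom f -> rmod_hom g ->
    @exact3 (of_lmod N1) (of_lmod N2) (of_lmod N3) f g ->
    @exact3 (tensor_raw (tdRL N1 la)) (tensor_raw (tdRL N2 la))
            (tensor_raw (tdRL N3 la))
      (@tmap (tdRL N1 la) (tdRL N2 la) f id)
      (@tmap (tdRL N2 la) (tdRL N3 la) g id).

Definition faithfully_flat_left (R : kalg) (L : lmodType k) (la : R -> L -> L)
  : Prop :=
  forall (N1 N2 N3 : rmodule R) (f : N1 -> N2) (g : N2 -> N3),
    rmod_hom f -> rmod_hom g ->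
    (@exact3 (of_lmod N1) (of_lmod N2) (of_lmod N3) f g <->
     @exact3 (tensor_raw (tdRL N1 la)) (tensor_raw (tdRL N2 la))
             (tensor_raw (tdRL N3 la))
       (@tmap (tdRL N1 la) (tdRL N2 la) f id)
       (@tmap (tdRL N2 la) (tdRL N3 la) g id)).

Section Descent.
Local Unset Implicit Arguments.
Variables (X : Type) (B : X -> kalg) (A : kcat X) (i : kXfunctor B A).

Definition ila (x y : X) (b : B x) (a : Hom A x y) : Hom A x y :=
  comp A (ifun i x b) a.

Definition tdA (x y : X) (V : rawmod) (rho : V -> B x -> V) (P : V -> Prop)
  : tdata := @TData V (of_lmod (Hom A x y)) (B x) rho (@ila x y) P.

Definition tdA_ract (x : X) (V : rawmod) (rho : V -> B x -> V)
  (t : tensor (tdA x x V rho (fun _ => True))) (b : B x)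
  : tensor (tdA x x V rho (fun _ => True)) :=
  @tract (tdA x x V rho (fun _ => True)) (B x)
    (fun (a : Hom A x x) b => comp A a (ifun i x b)) t b.

Definition tdAA (x y : X) (V : rawmod) (rho : V -> B x -> V) : tdata :=
  @tdA x y (tensor_raw (tdA x x V rho (fun _ => True))) (@tdA_ract x V rho)
    (fun _ => True).

Section OnM.
Variable M : rAmodule A.
Definition Mrho (x : X) (m : Mc M x x) (b : B x) : Mc M x x := Ma M m (ifun i x b).

Definition tdM (x y : X) : tdata := @tdA x y (of_lmod (Mc M x x)) (@Mrho x) (fun _ => True).
Definition tdMM (x y : X) : tdata := @tdAA x y (of_lmod (Mc M x x)) (@Mrho x).

Definition is_descent (sigma : forall x y, Mc M x y -> tensor (tdM x y)) : Prop :=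
  [/\
      (forall x y (c : k) (m m' : Mc M x y),
          sigma x y (c *: m + m') =
          tadd (tscale c (sigma x y m)) (sigma x y m')),
      (forall x y z (m : Mc M x y) (a : Hom A y z),
          sigma x z (Ma M m a) =
          @tmap (tdM x y) (tdM x z) id (fun a' => comp A a' a) (sigma x y m)),
      (forall x y (m : Mc M x y),
          @tmap (tdM x y) (tdMM x y) (sigma x x) id (sigma x y m) =
          @tmap (tdM x y) (tdMM x y) (fun m0 => @tmul (tdM x x) m0 (idm A x)) id
                (sigma x y m)) &
      (forall x y (m : Mc M x y),
          @tlift (tdM x y) (of_lmod (Mc M x y)) (fun m0 a => Ma M m0 a)
                 (sigma x y m) = m)].

Definition Gpred (sigma : forall x y, Mc M x y -> tensor (tdM x y)) (x : X)
  (m : Mc M x x) : Prop :=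
  sigma x x m = @tmul (tdM x x) m (idm A x).

Definition tdFG (sigma : forall x y, Mc M x y -> tensor (tdM x y)) (x y : X)
  : tdata := @tdA x y (of_lmod (Mc M x x)) (@Mrho x) (Gpred sigma x).

Definition counit (sigma : forall x y, Mc M x y -> tensor (tdM x y)) (x y : X)
  : tensor (tdFG sigma x y) -> Mc M x y :=
  @tlift (tdFG sigma x y) (of_lmod (Mc M x y)) (fun m a => Ma M m a).

Definition counit_iso (sigma : forall x y, Mc M x y -> tensor (tdM x y)) : Prop :=
  forall x y, bijective (counit sigma x y).
End OnM.

Section OnN.
Variable N : forall x, rmodule (B x).
Definition tdN (x y : X) : tdata := @tdA x y (of_lmod (N x)) (rma (N x)) (fun _ => True).
Definition tdNN (x y : X) : tdata := @tdAA x y (of_lmod (N x)) (rma (N x)).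

Definition sigmaF (x y : X) : tensor (tdN x y) -> tensor (tdNN x y) :=
  @tmap (tdN x y) (tdNN x y) (fun n => @tmul (tdN x x) n (idm A x)) id.

Definition GFpred (x : X) (t : tensor (tdN x x)) : Prop :=
  sigmaF x x t = @tmul (tdNN x x) t (idm A x).

Definition unit_map (x : X) (n : N x) : tensor (tdN x x) :=
  @tmul (tdN x x) n (idm A x).

Definition unit_iso : Prop :=
  forall x, injective (unit_map x) /\
            (forall t, GFpred x t <-> exists n, unit_map x n = t).
End OnN.
End Descent.
End Defs.
Arguments ila {k X B A} i x y.
Arguments tdM {k X B A} i M x y.
Arguments is_descent {k X B A} i M sigma.
Arguments counit_iso {k X B A} i M sigma.
Arguments unit_iso {k X B A} i N.

From Pilot Require Import Defs.
From HB Require Import structures.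
From mathcomp Require Import all_boot all_algebra.
From mathcomp Require Import boolp.
From Stdlib Require Import ClassicalEpsilon Permutation ProofIrrelevance
  FunctionalExtensionality PropExtensionality.
Set Implicit Arguments. Unset Strict Implicit. Unset Printing Implicit Defensive.
Import GRing.Theory.
Local Open Scope ring_scope.

(* Write A for A_xx. For a right B_x-module V, the unit V -> G(F(V))_x is the
   kernel map of the Amitsur complex  V -> V (x) A => V (x) A (x) A,  with
   differential  t |-> t_(0) (x) 1 (x) t_(1) - t (x) 1.  After tensoring with A
   this complex is contractible (the homotopy multiplies the last two factors),
   so faithful flatness of A makes the unit an isomorphism.  For a descent datum
   (M, sigma), G(M)_x is the kernel of  sigma_xx - (- (x) 1)  on M_xx; since A_xy
   is flat, condition (ii) puts sigma_xy(m) in the image of G(M)_x (x) A_xy, and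
   condition (iii) shows that this gives an inverse of the counit.  Conversely,
   if N1 -> N2 -> N3 becomes exact after (x) A, exactness at N2 is pulled back
   along the unit isomorphisms of N3 and of the image of N1 -> N2, using flatness
   of A to keep the image injective in N2 (x) A (x) A. *)

Section TensorClasses.
Variables (k : comPzRingType) (D : tdata k).
Local Notation P := (@tP k D).
Local Notation tcls := (@tcls k D).

Lemma tensor_val_inj (t u : tensor D) : proj1_sig t = proj1_sig u -> t = u.
Proof.
case: t => C hC; case: u => C' hC' /= e; subst C'.
by rewrite (proof_irrelevance _ hC hC').
Qed.

Lemma tadm_cat s t : tadm (D:=D) s -> tadm (D:=D) t -> tadm (D:=D) (s ++ t).
Proof. by move=> h1 h2; apply/List.Forall_app. Qed.

Lemma tadm_cons p s : tadm (D:=D) (p :: s) <-> P p.1 /\ tadm (D:=D) s.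
Proof. by split; [move=> h; inversion h | case=> *; constructor]. Qed.

Lemma tadm1 n l : P n -> tadm (D:=D) [:: (n, l)].
Proof. by move=> hn; apply/tadm_cons; split=> //; constructor. Qed.

Lemma tadm2 n n' l l' : P n -> P n' -> tadm (D:=D) [:: (n, l); (n', l')].
Proof. by move=> hn hn'; apply/tadm_cons; split=> //; apply: tadm1. Qed.

Lemma tcls_val s : tadm (D:=D) s -> proj1_sig (tcls s) = tequiv s.
Proof. by rewrite /Defs.tcls; case: excluded_middle_informative. Qed.

Lemma tcls_eq s t : tadm (D:=D) s -> tadm (D:=D) t -> tequiv s t -> tcls s = tcls t.
Proof.
move=> hs ht e; apply: tensor_val_inj; rewrite !tcls_val //.
apply: functional_extensionality => u; apply: propositional_extensionality.
split=> h; [apply: te_trans h; exact: te_sym | exact: te_trans h].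
Qed.

Lemma tcls_inj s t : tadm (D:=D) s -> tadm (D:=D) t -> tcls s = tcls t -> tequiv s t.
Proof.
move=> hs ht /(f_equal (@proj1_sig _ _)); rewrite !tcls_val // => e.
by have := te_refl t; rewrite -e.
Qed.

Lemma trepP t : tadm (D:=D) (trep t) /\ proj1_sig t = tequiv (trep t).
Proof. by rewrite /trep; case: constructive_indefinite_description => s /= []. Qed.

Lemma tadm_trep t : tadm (D:=D) (trep t). Proof. by case: (trepP t). Qed.

Lemma trepK t : tcls (trep t) = t.
Proof.
apply: tensor_val_inj; rewrite tcls_val; last exact: tadm_trep.
by case: (trepP t).
Qed.

Lemma trep_tcls s : tadm (D:=D) s -> tequiv (trep (tcls s)) s.
Proof. by move=> h; apply: tcls_inj; rewrite ?trepK //; apply: tadm_trep. Qed.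

Lemma tensor_cls (t : tensor D) : exists2 s, tadm (D:=D) s & t = tcls s.
Proof. by exists (trep t); [exact: tadm_trep | rewrite trepK]. Qed.

Lemma tadd_cls s t : tadm (D:=D) s -> tadm (D:=D) t ->
  tadd (tcls s) (tcls t) = tcls (s ++ t).
Proof.
move=> hs ht; apply: tcls_eq; try apply: tadm_cat => //; try exact: tadm_trep.
by apply: te_cat; apply: trep_tcls.
Qed.

Lemma tcls_cons p s : tadm (D:=D) (p :: s) ->
  tcls (p :: s) = tadd (tmul p.1 p.2) (tcls s).
Proof.
case/tadm_cons=> hp hs; rewrite /tmul tadd_cls //; first by case: p hp.
exact: tadm1.
Qed.

Lemma tensor_ind (Q : tensor D -> Prop) :
  Q (tzero D) -> (forall n l, P n -> Q (tmul n l)) ->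
  (forall t u, Q t -> Q u -> Q (tadd t u)) -> forall t, Q t.
Proof.
move=> h0 h1 h2 t; have [s hs ->] := tensor_cls t.
elim: s hs => [|p s IH] hs; first exact: h0.
rewrite tcls_cons //; case/tadm_cons: hs => hp hs.
by apply: h2; [apply: h1 | apply: IH].
Qed.

Lemma tmul_addl n n' l : P n -> P n' -> P (radd n n') ->
  tmul (radd n n') l = tadd (tmul (D:=D) n l) (tmul n' l).
Proof.
move=> hn hn' hnn; rewrite /tmul tadd_cls; try exact: tadm1.
by apply: tcls_eq; [exact: tadm1 | exact: tadm2 | exact: te_addl].
Qed.

Lemma tmul_addr n l l' : P n ->
  tmul n (radd l l') = tadd (tmul (D:=D) n l) (tmul n l').
Proof.
move=> hn; rewrite /tmul tadd_cls; try exact: tadm1.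
by apply: tcls_eq; [exact: tadm1 | exact: tadm2 | exact: te_addr].
Qed.

Lemma tmul0l l : P (rzero (tN D)) -> tmul (D:=D) (rzero _) l = tzero D.
Proof. by move=> h; apply: tcls_eq; [exact: tadm1 | constructor | exact: te_zerol]. Qed.

Lemma tmul_bal n r l : P n -> P (tra n r) ->
  tmul (D:=D) (tra n r) l = tmul n (tla r l).
Proof. by move=> h h'; apply: tcls_eq; [exact: tadm1 | exact: tadm1 | exact: te_bal]. Qed.

Lemma tadd0 : left_id (tzero D) (@tadd k D).
Proof. by move=> t; have [s hs ->] := tensor_cls t; rewrite tadd_cls //; constructor. Qed.

Lemma taddA : associative (@tadd k D).
Proof.
move=> t u w; have [s hs ->] := tensor_cls t; have [s' hs' ->] := tensor_cls u.
have [s'' hs'' ->] := tensor_cls w.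
by rewrite !tadd_cls ?catA //; apply: tadm_cat.
Qed.

Lemma taddC : commutative (@tadd k D).
Proof.
move=> t u; have [s hs ->] := tensor_cls t; have [s' hs' ->] := tensor_cls u.
rewrite !tadd_cls //; apply: tcls_eq; try exact: tadm_cat.
by apply: te_perm; apply: Permutation_app_comm.
Qed.
End TensorClasses.

(* The conditions under which [tmap f g] respects the generators of [tequiv]. *)
Record tmap_compat (k : comPzRingType) (D D' : tdata k) (rho : tR D -> tR D')
    (f : tN D -> tN D') (g : tL D -> tL D') : Prop := TmapCompat {
  tmap_addl : forall n n', tP n -> tP n' -> f (radd n n') = radd (f n) (f n');
  tmap_zerol : tP (rzero (tN D)) -> f (rzero _) = rzero _;
  tmap_P : forall n, tP n -> tP (f n);
  tmap_ract : forall n r, tP n -> tP (tra n r) -> f (tra n r) = tra (f n) (rho r);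
  tmap_addr : forall l l', g (radd l l') = radd (g l) (g l');
  tmap_zeror : g (rzero _) = rzero _;
  tmap_lact : forall r l, g (tla r l) = tla (rho r) (g l) }.

Section TensorMap.
Variables (k : comPzRingType) (D D' : tdata k) (rho : tR D -> tR D').
Variables (f : tN D -> tN D') (g : tL D -> tL D').
Hypothesis fg : tmap_compat rho f g.

Let fg_pair (p : tN D * tL D) : tN D' * tL D' := (f p.1, g p.2).

Lemma tequiv_map s t : tequiv s t -> tequiv (map fg_pair s) (map fg_pair t).
Proof.
case: fg => fD f0 fP fra gD g0 gla.
elim=> {s t} /=.
- by move=> s; apply: te_refl.
- by move=> s t _; apply: te_sym.
- by move=> s t u _ IH1 _; apply: te_trans IH1.
- by move=> s t pst; apply: te_perm; apply: Permutation_map.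
- by move=> s s' t t' _ IH1 _ IH2; rewrite !map_cat; apply: te_cat.
- by move=> n n' l hn hn'; rewrite /fg_pair /= fD //; apply: te_addl; apply: fP.
- by move=> n l l' hn; rewrite /fg_pair /= gD; apply: te_addr; apply: fP.
- by move=> l h0; rewrite /fg_pair /= f0 //; apply: te_zerol; rewrite -f0 //; apply: fP.
- by move=> n hn; rewrite /fg_pair /= g0; apply: te_zeror; apply: fP.
- move=> n r l hn hnr; rewrite /fg_pair /= fra // gla.
  by apply: te_bal; [apply: fP | rewrite -fra //; apply: fP].
Qed.

Lemma tadm_map s : tadm s -> tadm (map fg_pair s).
Proof.
elim: s => [|p s IH] hs; first by constructor.
case/tadm_cons: hs => hp hs.
by apply/tadm_cons; split; [apply: (tmap_P fg) | apply: IH].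
Qed.

Lemma tmap_cls s : tadm s -> tmap f g (tcls s) = tcls (map fg_pair s).
Proof.
move=> hs; apply: tcls_eq; [apply: tadm_map; apply: tadm_trep | exact: tadm_map |].
by apply: tequiv_map; apply: trep_tcls.
Qed.

Lemma tmapD t u : tmap f g (tadd t u) = tadd (tmap f g t) (tmap f g u).
Proof.
have [s hs ->] := tensor_cls t; have [s' hs' ->] := tensor_cls u.
rewrite tadd_cls // !tmap_cls ?map_cat ?tadd_cls //; try exact: tadm_map.
exact: tadm_cat.
Qed.

Lemma tmapM n l : tP n -> tmap (D':=D') f g (tmul n l) = tmul (f n) (g l).
Proof. by move=> hn; rewrite /tmul tmap_cls //; apply: tadm1. Qed.

Lemma tmap0 : tmap (D':=D') f g (tzero D) = tzero D'.
Proof. by rewrite /tzero tmap_cls //; constructor. Qed.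
End TensorMap.

Record balanced (k : comPzRingType) (D : tdata k) (V : lmodType k)
    (phi : tN D -> tL D -> V) : Prop := Balanced {
  balanced_addl : forall n n' l, tP n -> tP n' -> phi (radd n n') l = phi n l + phi n' l;
  balanced_addr : forall n l l', tP n -> phi n (radd l l') = phi n l + phi n l';
  balanced_zerol : forall l, tP (rzero (tN D)) -> phi (rzero _) l = 0;
  balanced_zeror : forall n, tP n -> phi n (rzero _) = 0;
  balanced_act : forall n r l, tP n -> tP (tra n r) -> phi (tra n r) l = phi n (tla r l) }.

Section TensorLift.
Variables (k : comPzRingType) (D : tdata k) (V : lmodType k) (phi : tN D -> tL D -> V).
Hypothesis phi_bal : balanced phi.
Local Notation lift := (tlift (Z:=of_lmod V) phi).

Let sum_phi (s : seq (tN D * tL D)) : V := foldr (fun p z => phi p.1 p.2 + z) 0 s.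

Lemma sum_phi_cat s t : sum_phi (s ++ t) = sum_phi s + sum_phi t.
Proof. by elim: s => [|p s IH] /=; rewrite ?add0r // IH addrA. Qed.

Lemma sum_phi_tequiv s t : tequiv s t -> sum_phi s = sum_phi t.
Proof.
case: phi_bal => pDl pDr p0l p0r pbal.
elim=> {s t} //=.
- by move=> s t u _ -> _ ->.
- move=> s t; elim=> {s t} //= [p s t _ -> | p q s | s t u _ -> _ ->] //.
  by rewrite !addrA (addrC (phi q.1 q.2)).
- by move=> s s' t t' _ e1 _ e2; rewrite !sum_phi_cat e1 e2.
- by move=> n n' l hn hn'; rewrite pDl // !addr0.
- by move=> n l l' hn; rewrite pDr // !addr0.
- by move=> l h0; rewrite p0l // addr0.
- by move=> n hn; rewrite p0r // addr0.
- by move=> n r l hn hnr; rewrite pbal.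
Qed.

Lemma tlift_cls s : tadm s -> lift (tcls s) = sum_phi s.
Proof. by move=> hs; apply: sum_phi_tequiv; apply: trep_tcls. Qed.

Lemma tliftD t u : lift (tadd t u) = lift t + lift u.
Proof.
have [s hs ->] := tensor_cls t; have [s' hs' ->] := tensor_cls u.
by rewrite tadd_cls // !tlift_cls ?sum_phi_cat //; apply: tadm_cat.
Qed.

Lemma tliftM n l : tP n -> lift (tmul n l) = phi n l.
Proof. by move=> hn; rewrite /tmul tlift_cls /= ?addr0 //; apply: tadm1. Qed.

Lemma tlift0 : lift (tzero D) = 0.
Proof. by rewrite /tzero tlift_cls //; constructor. Qed.
End TensorLift.

Record lmod_tdata (k : comPzRingType) (D : tdata k) : Prop := LmodTdata {
  lt_scaleDr : forall c (n n' : tN D), rscale c (radd n n') = radd (rscale c n) (rscale c n');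
  lt_scale0 : forall c, rscale c (rzero (tN D)) = rzero _;
  lt_scale_act : forall c (n : tN D) r, rscale c (tra n r) = tra (rscale c n) r;
  lt_scaleA : forall a b (n : tN D), rscale a (rscale b n) = rscale (a * b) n;
  lt_scale1 : forall (n : tN D), rscale 1 n = n;
  lt_scaleDl : forall a b (n : tN D), rscale (a + b) n = radd (rscale a n) (rscale b n);
  lt_addN : forall (n : tN D), radd (rscale (-1) n) n = rzero (tN D);
  lt_P0 : tP (rzero (tN D));
  lt_PD : forall (n n' : tN D), tP n -> tP n' -> tP (radd n n');
  lt_PZ : forall c (n : tN D), tP n -> tP (rscale c n) }.

Definition Tens (k : comPzRingType) (D : tdata k) of lmod_tdata D : Type := tensor D.

Section TensorLmod.
Variables (k : comPzRingType) (D : tdata k).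
Hypothesis hD : lmod_tdata D.

Lemma tscale_compat c : tmap_compat (D:=D) (D':=D) id (rscale c) id.
Proof. by case: hD => *; split=> //; auto. Qed.

Let tadm_scale c := tadm_map (tscale_compat c).

Lemma tscale_cls c s : tadm s ->
  tscale c (tcls s) = tcls (map (fun p : tN D * tL D => (rscale c p.1, p.2)) s).
Proof. exact: (tmap_cls (tscale_compat c)). Qed.

Lemma tscaleM c (n : tN D) l : tP n -> tscale c (tmul (D:=D) n l) = tmul (rscale c n) l.
Proof. exact: (tmapM (tscale_compat c)). Qed.

Lemma tscaleDr c : {morph tscale c : t u / tadd (D:=D) t u}.
Proof. exact: (tmapD (tscale_compat c)). Qed.

Lemma taddN : left_inverse (tzero D) (tscale (-1)) (@tadd k D).
Proof.
move=> t; have [s hs ->] := tensor_cls t; rewrite tscale_cls // tadd_cls //;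
  last exact: tadm_scale.
apply: tcls_eq; [by apply: tadm_cat => //; apply: tadm_scale | by constructor |].
elim: s hs => [|[n l] s IH] hs /=; first exact: te_refl.
case/tadm_cons: hs => /= hn hs.
apply: (@te_trans _ _ _ ([:: (rscale (-1) n, l); (n, l)] ++
                   (map (fun p => (rscale (-1) p.1, p.2)) s ++ s))).
  by apply: te_perm => /=; apply: perm_skip; apply: Permutation_sym;
     apply: Permutation_middle.
rewrite -[[::]]/([::] ++ [::]); apply: te_cat; last exact: IH.
have hNn : tP (rscale (-1) n) by apply: (lt_PZ hD).
apply: te_trans (te_sym (te_addl _ hNn hn)) _.
by rewrite (lt_addN hD); apply: te_zerol; apply: (lt_P0 hD).
Qed.

Lemma tscaleA a b (t : tensor D) : tscale a (tscale b t) = tscale (a * b) t.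
Proof.
have [s hs ->] := tensor_cls t; rewrite !tscale_cls //; last exact: tadm_scale.
by rewrite -map_comp; congr tcls; apply: eq_map => p /=; rewrite (lt_scaleA hD).
Qed.

Lemma tscale1 : left_id 1 (@tscale k D).
Proof.
move=> t; have [s hs ->] := tensor_cls t; rewrite tscale_cls //.
by congr tcls; rewrite -[RHS]map_id; apply: eq_map => -[n l] /=; rewrite (lt_scale1 hD).
Qed.

Lemma tscaleDl (t : tensor D) a b : tscale (a + b) t = tadd (tscale a t) (tscale b t).
Proof.
have [s hs ->] := tensor_cls t; rewrite !tscale_cls // tadd_cls; try exact: tadm_scale.
apply: tcls_eq; [exact: tadm_scale | by apply: tadm_cat; apply: tadm_scale |].
elim: s hs => [|[n l] s IH] hs /=; first exact: te_refl.
case/tadm_cons: hs => /= hn hs.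
apply: (@te_trans _ _ _ ([:: (rscale a n, l); (rscale b n, l)] ++
                   (map (fun p => (rscale a p.1, p.2)) s ++
                    map (fun p => (rscale b p.1, p.2)) s))); last first.
  by apply: te_perm => /=; apply: perm_skip; apply: Permutation_middle.
rewrite -cat1s; apply: te_cat; last exact: IH.
by rewrite (lt_scaleDl hD); apply: te_addl; apply: (lt_PZ hD).
Qed.
End TensorLmod.

HB.instance Definition _ (k : comPzRingType) (D : tdata k) (hD : lmod_tdata D) :=
  gen_eqMixin (Tens hD).
HB.instance Definition _ (k : comPzRingType) (D : tdata k) (hD : lmod_tdata D) :=
  gen_choiceMixin (Tens hD).
HB.instance Definition _ (k : comPzRingType) (D : tdata k) (hD : lmod_tdata D) :=
  GRing.isZmodule.Build (Tens hD) (@taddA k D) (@taddC k D) (@tadd0 k D) (taddN hD).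
HB.instance Definition _ (k : comPzRingType) (D : tdata k) (hD : lmod_tdata D) :=
  GRing.Zmodule_isLmodule.Build k (Tens hD)
    (tscaleA hD) (@tscale1 k D hD) (tscaleDr hD) (tscaleDl hD).

Section Klinear.
Variables (k : comPzRingType) (U V : lmodType k) (f : U -> V).
Hypothesis hf : klinear f.

Lemma klinD u v : f (u + v) = f u + f v.
Proof. by rewrite -[u in LHS]scale1r hf scale1r. Qed.

Lemma klin0 : f 0 = 0.
Proof. by apply: (@addrI _ (f 0)); rewrite -klinD !addr0. Qed.

Lemma klinZ c u : f (c *: u) = c *: f u.
Proof. by rewrite -[c *: u]addr0 hf klin0 addr0. Qed.

Lemma klinB u v : f (u - v) = f u - f v.
Proof. by rewrite klinD -scaleN1r klinZ scaleN1r. Qed.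

Lemma klin_inj : (forall u, f u = 0 -> u = 0) -> injective f.
Proof. by move=> f0 u v e; apply/eqP; rewrite -subr_eq0 (f0 (u - v)) // klinB e subrr. Qed.

Lemma klin_inj0 : injective f -> forall u, f u = 0 -> u = 0.
Proof. by move=> finj u fu0; apply: finj; rewrite fu0 klin0. Qed.
End Klinear.

Lemma lmod_tdata_of_lmod (k : comPzRingType) (V L : lmodType k) (R : Type)
    (ra : V -> R -> V) (la : R -> L -> L) (P : V -> Prop) :
  (forall r, klinear (fun m => ra m r)) ->
  P 0 -> (forall u v, P u -> P v -> P (u + v)) -> (forall c u, P u -> P (c *: u)) ->
  lmod_tdata (@TData k (of_lmod V) (of_lmod L) R ra la P).
Proof.
move=> hra P0 PD PZ; split=> //=.
- by move=> *; rewrite scalerDr.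
- by move=> *; rewrite scaler0.
- by move=> c n r; rewrite (klinZ (hra r)).
- by move=> *; rewrite scalerA.
- by move=> *; rewrite scale1r.
- by move=> *; rewrite scalerDl.
- by move=> n; rewrite scaleN1r addNr.
Qed.

Lemma lmod_tdRL (k : comPzRingType) (R : kalg k) (V : rmodule R) (L : lmodType k)
  (la : R -> L -> L) : lmod_tdata (tdRL V la).
Proof. by apply: lmod_tdata_of_lmod => //; apply: rma_linl. Qed.

Lemma rmod_hom_comp (k : comPzRingType) (R : kalg k) (U V W : rmodule R)
    (f : U -> V) (g : V -> W) :
  rmod_hom f -> rmod_hom g -> rmod_hom (fun u => g (f u)).
Proof.
case=> f1 f2 [g1 g2]; split; last by move=> n r; rewrite f2 g2.
by move=> c u v; rewrite f1 g1.
Qed.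

Lemma rmod_hom_sub (k : comPzRingType) (R : kalg k) (V W : rmodule R) (f g : V -> W) :
  rmod_hom f -> rmod_hom g -> rmod_hom (fun v => f v - g v).
Proof.
case=> f1 f2 [g1 g2]; split.
- by move=> c u v; rewrite f1 g1 scalerBr opprD addrACA.
- by move=> n r; rewrite f2 g2 (klinB (@rma_linl _ _ W r)).
Qed.

Lemma rmod_hom0 (k : comPzRingType) (R : kalg k) (V W : rmodule R) :
  rmod_hom (N:=V) (N':=W) (fun _ => 0).
Proof.
split; first by move=> *; rewrite scaler0 addr0.
by move=> n r; rewrite (klin0 (@rma_linl _ _ W r)).
Qed.

Section TensorA.
Variables (k : comPzRingType) (X : Type) (B : X -> kalg k) (A : kcat k X).
Variables (i : kXfunctor B A) (x : X).
Local Notation R := (B x).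
Local Notation la y := (ila i x y).

Lemma ilaE y r (a : Defs.Hom A x y) : la y r a = Defs.comp (ifun i r) a.
Proof. by []. Qed.

Definition tensA (V : rmodule R) y : lmodType k := Tens (lmod_tdRL V (la y)).
Local Notation tm V y n l := (@tmul _ (tdRL V (la y)) n l : tensA V y).

Section Generators.
Variables (V : rmodule R) (y : X).

Lemma tensA_ind (Q : tensA V y -> Prop) :
  Q 0 -> (forall n l, Q (tm V y n l)) ->
  (forall t u, Q t -> Q u -> Q (t + u)) -> forall t, Q t.
Proof. by move=> h0 h1 h2; apply: tensor_ind. Qed.

Lemma tensA_mulDl (n n' : V) l : tm V y (n + n') l = tm V y n l + tm V y n' l.
Proof. exact: (@tmul_addl _ (tdRL V (la y)) n n' l I I I). Qed.

Lemma tensA_mulDr (n : V) l l' : tm V y n (l + l') = tm V y n l + tm V y n l'.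
Proof. exact: (@tmul_addr _ (tdRL V (la y)) n l l' I). Qed.

Lemma tensA_mulZl (n : V) c l : tm V y (c *: n) l = c *: tm V y n l.
Proof. exact: (esym (@tscaleM _ _ (lmod_tdRL V (la y)) c n l I)). Qed.

Lemma tensA_bal (n : V) r l : tm V y (rma n r) l = tm V y n (la y r l).
Proof. exact: (@tmul_bal _ (tdRL V (la y)) n r l I I). Qed.

Lemma tensA_mulZr (n : V) c l : tm V y n (c *: l) = c *: tm V y n l.
Proof.
have -> : c *: l = la y (c *: aone R) l.
  by rewrite ilaE (klinZ (@ifun_lin _ _ _ _ i x)) ifun_one (klinZ (Defs.comp_linl l)) Defs.comp1l.
by rewrite -tensA_bal (klinZ (rma_linr n)) rma1 tensA_mulZl.
Qed.

Lemma tensA_mul0l l : tm V y 0 l = 0.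
Proof. exact: (@tmul0l _ (tdRL V (la y)) l I). Qed.

Lemma tensA_mulBl (n n' : V) l : tm V y (n - n') l = tm V y n l - tm V y n' l.
Proof. by rewrite tensA_mulDl -scaleN1r tensA_mulZl scaleN1r. Qed.
End Generators.

Section MapA.
Variables (V W : rmodule R) (y : X) (f : V -> W).
Hypothesis hf : rmod_hom f.

Definition mapA (t : tensA V y) : tensA W y :=
  tmap (D:=tdRL V (la y)) (D':=tdRL W (la y)) f id t.

Lemma mapA_compat : tmap_compat (D:=tdRL V (la y)) (D':=tdRL W (la y)) id f id.
Proof.
case: hf => hl hr; split=> //=.
- by move=> *; rewrite (klinD hl).
- by move=> *; rewrite (klin0 hl).
Qed.

Lemma mapA_mul n l : mapA (tm V y n l) = tm W y (f n) l.
Proof. exact: (tmapM mapA_compat). Qed.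

Lemma mapAD t u : mapA (t + u) = mapA t + mapA u.
Proof. exact: (tmapD mapA_compat). Qed.

Lemma mapA0 : mapA 0 = 0.
Proof. exact: (tmap0 mapA_compat). Qed.

Lemma mapA_lin : klinear mapA.
Proof.
move=> c t u; rewrite mapAD; congr (_ + _).
elim/tensA_ind: t => [|n l|t u' IH1 IH2].
- by rewrite scaler0 mapA0 scaler0.
- by rewrite -tensA_mulZl !mapA_mul -tensA_mulZl; case: hf => hl _; rewrite (klinZ hl).
- by rewrite scalerDr !mapAD IH1 IH2 scalerDr.
Qed.
End MapA.

Lemma mapA_comp (U V W : rmodule R) y (f : U -> V) (g : V -> W) :
  rmod_hom f -> rmod_hom g ->
  forall t, mapA g (mapA f t) = mapA (fun u => g (f u)) (t : tensA U y).
Proof.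
move=> hf hg; have hgf := rmod_hom_comp hf hg.
elim/tensA_ind => [|n l|t u IH1 IH2]; first by rewrite !mapA0.
- by rewrite !mapA_mul.
- by rewrite !mapAD // IH1 IH2.
Qed.

Lemma eq_mapA (V W : rmodule R) y (f g : V -> W) :
  rmod_hom f -> rmod_hom g -> f =1 g -> forall t, mapA f t = mapA g (t : tensA V y).
Proof.
move=> hf hg e; elim/tensA_ind => [|n l|t u IH1 IH2]; first by rewrite !mapA0.
- by rewrite !mapA_mul // e.
- by rewrite !mapAD // IH1 IH2.
Qed.

Lemma mapA_zero_fun (V W : rmodule R) y (t : tensA V y) : mapA (fun _ : V => 0 : W) t = 0.
Proof.
have h0 := rmod_hom0 V W.
elim/tensA_ind: t => [|n l|t u IH1 IH2]; first exact: mapA0.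
- by rewrite mapA_mul // tensA_mul0l.
- by rewrite mapAD // IH1 IH2 addr0.
Qed.

Lemma mapA_sub (V W : rmodule R) y (f g : V -> W) :
  rmod_hom f -> rmod_hom g ->
  forall t, mapA (fun v => f v - g v) t = mapA f t - mapA g (t : tensA V y).
Proof.
move=> hf hg; have hfg := rmod_hom_sub hf hg.
elim/tensA_ind => [|n l|t u IH1 IH2]; first by rewrite !mapA0 // subr0.
- by rewrite !mapA_mul // tensA_mulBl.
- by rewrite !mapAD // IH1 IH2 opprD addrACA.
Qed.

Section RmulA.
Variable V : rmodule R.

Definition rmulA y z (a' : Defs.Hom A y z) (t : tensA V y) : tensA V z :=
  tmap (D:=tdRL V (la y)) (D':=tdRL V (la z)) id (fun a => Defs.comp a a') t.

Lemma rmulA_compat y z (a' : Defs.Hom A y z) :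
  tmap_compat (D:=tdRL V (la y)) (D':=tdRL V (la z)) id id (fun a => Defs.comp a a').
Proof.
split=> //=.
- by move=> l l'; rewrite (klinD (Defs.comp_linl a')).
- by rewrite (klin0 (Defs.comp_linl a')).
- by move=> r l; rewrite !ilaE Defs.compA.
Qed.

Variables (y z : X).
Implicit Types (a : Defs.Hom A y z) (t : tensA V y).

Lemma rmulA_mul a n l : rmulA a (tm V y n l) = tm V z n (Defs.comp l a).
Proof. exact: (tmapM (rmulA_compat a)). Qed.

Lemma rmulAD a t u : rmulA a (t + u) = rmulA a t + rmulA a u.
Proof. exact: (tmapD (rmulA_compat a)). Qed.

Lemma rmulA0 a : rmulA a 0 = 0.
Proof. exact: (tmap0 (rmulA_compat a)). Qed.

Lemma rmulA_lin a : klinear (rmulA a).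
Proof.
move=> c t u; rewrite rmulAD; congr (_ + _).
elim/tensA_ind: t => [|n l|t u' IH1 IH2].
- by rewrite scaler0 rmulA0 scaler0.
- by rewrite -tensA_mulZl !rmulA_mul -tensA_mulZl.
- by rewrite scalerDr !rmulAD IH1 IH2 scalerDr.
Qed.

Lemma rmulADr a1 a2 t : rmulA (a1 + a2) t = rmulA a1 t + rmulA a2 t.
Proof.
elim/tensA_ind: t => [|n l|t u IH1 IH2].
- by rewrite !rmulA0 addr0.
- by rewrite !rmulA_mul (klinD (Defs.comp_linr l)) tensA_mulDr.
- by rewrite !rmulAD IH1 IH2 addrACA.
Qed.

Lemma rmulAZr c a t : rmulA (c *: a) t = c *: rmulA a t.
Proof.
elim/tensA_ind: t => [|n l|t u IH1 IH2].
- by rewrite !rmulA0 scaler0.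
- by rewrite !rmulA_mul (klinZ (Defs.comp_linr l)) tensA_mulZr.
- by rewrite !rmulAD IH1 IH2 scalerDr.
Qed.

Lemma rmulA0r t : rmulA (0 : Defs.Hom A y z) t = 0.
Proof. by rewrite -(scale0r 0) rmulAZr scale0r. Qed.
End RmulA.

Lemma rmulA_comp (V : rmodule R) y z w (a : Defs.Hom A y z) (a' : Defs.Hom A z w)
    (t : tensA V y) :
  rmulA a' (rmulA a t) = rmulA (Defs.comp a a') t.
Proof.
elim/tensA_ind: t => [|n l|t u IH1 IH2].
- by rewrite !rmulA0.
- by rewrite !rmulA_mul Defs.compA.
- by rewrite !rmulAD IH1 IH2.
Qed.

Lemma rmulA1 (V : rmodule R) y (t : tensA V y) : rmulA (idm A y) t = t.
Proof.
elim/tensA_ind: t => [|n l|t u IH1 IH2].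
- by rewrite !rmulA0.
- by rewrite !rmulA_mul Defs.comp1r.
- by rewrite !rmulAD IH1 IH2.
Qed.

Lemma rmulA_mapA (V W : rmodule R) (f : V -> W) (hf : rmod_hom f) y z
    (a : Defs.Hom A y z) (t : tensA V y) :
  rmulA a (mapA f t) = mapA f (rmulA a t).
Proof.
elim/tensA_ind: t => [|n l|t u IH1 IH2].
- by rewrite mapA0 // !rmulA0 mapA0.
- by rewrite mapA_mul // !rmulA_mul mapA_mul.
- by rewrite mapAD // !rmulAD IH1 IH2 mapAD.
Qed.

Section TensAx.
Variable V : rmodule R.

Definition tensAx_act (t : tensA V x) (b : R) : tensA V x := rmulA (ifun i b) t.

Lemma tensAx_act_linl r : klinear (fun t => tensAx_act t r).
Proof. exact: rmulA_lin. Qed.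

Lemma tensAx_act_linr t : klinear (tensAx_act t).
Proof. by move=> c b b'; rewrite /tensAx_act (@ifun_lin _ _ _ _ i x) rmulADr rmulAZr. Qed.

Lemma tensAx_actA t r s : tensAx_act (tensAx_act t r) s = tensAx_act t (amul r s).
Proof. by rewrite /tensAx_act rmulA_comp ifun_mul. Qed.

Lemma tensAx_act1 t : tensAx_act t (aone R) = t.
Proof. by rewrite /tensAx_act ifun_one rmulA1. Qed.

Definition tensAx : rmodule R :=
  RModule tensAx_act_linl tensAx_act_linr tensAx_actA tensAx_act1.
End TensAx.

Lemma mapA_hom (V W : rmodule R) (f : V -> W) :
  rmod_hom f -> rmod_hom (N:=tensAx V) (N':=tensAx W) (mapA f).
Proof.
move=> hf; split; first exact: mapA_lin.
by move=> t r; rewrite /= /tensAx_act rmulA_mapA.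
Qed.
End TensorA.

Section Exactness.
Variables (k : comPzRingType) (U V W : lmodType k) (z : U -> V) (f : V -> W).
Hypotheses (hf : klinear f) (z0 : forall u, z u = 0).

Lemma exact3_kernel :
  @exact3 k (of_lmod U) (of_lmod V) (of_lmod W) z f <-> forall v, f v = 0 -> v = 0.
Proof.
split=> [h v /(h v) [u <-] // | h v]; split=> [/h -> | [u <-]].
- by exists 0; rewrite z0.
- by rewrite z0 (klin0 hf).
Qed.
End Exactness.

Section AmitsurComplex.
Variables (k : comPzRingType) (X : Type) (B : X -> kalg k) (A : kcat k X).
Variables (i : kXfunctor B A) (x : X).
Local Notation R := (B x).
Local Notation la := (ila i x x).
Local Notation TA V := (tensA i V x).
Local Notation tm V n l := (@tmul _ (tdRL V la) n l : TA V).
Local Notation TAx V := (tensAx i V).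

Section Complex.
Variable V : rmodule R.

Definition unitA (n : V) : TAx V := tm V n (idm A x).

Lemma unitA_hom : rmod_hom (N:=V) (N':=TAx V) unitA.
Proof.
split=> [c n n' | n r]; first by rewrite /unitA tensA_mulDl tensA_mulZl.
by rewrite /unitA /= /tensAx_act rmulA_mul tensA_bal ilaE Defs.comp1l Defs.comp1r.
Qed.

Definition amitsur (t : TAx V) : TAx (TAx V) := mapA unitA t - tm (TAx V) t (idm A x).

Lemma amitsur_hom : rmod_hom (N:=TAx V) (N':=TAx (TAx V)) amitsur.
Proof.
split=> [c t u | t r].
- rewrite /amitsur (mapA_lin unitA_hom) tensA_mulDl tensA_mulZl.
  by rewrite scalerBr addrACA opprD.
- rewrite /amitsur /= /tensAx_act (klinB (rmulA_lin (ifun i r))) (rmulA_mapA unitA_hom).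
  rewrite rmulA_mul Defs.comp1l; congr (_ - _).
  by rewrite -[rmulA _ _]/(tensAx_act t r) tensA_bal ilaE Defs.comp1r.
Qed.

Lemma amitsur_unitA n : amitsur (unitA n) = 0.
Proof. by rewrite /amitsur (mapA_mul unitA_hom) subrr. Qed.

(* t (x) a' |-> t a' : a contracting homotopy of the Amitsur complex tensored with A_xx *)
Definition contractA (T : TA (TAx V)) : TA V :=
  tlift (D:=tdRL (TAx V) la) (Z:=of_lmod (TA V)) (fun t a' => rmulA a' t) T.

Lemma contractA_balanced :
  balanced (D:=tdRL (TAx V) la) (V:=TA V) (fun t a' => rmulA a' t).
Proof.
split=> /= [n n' l _ _ | n l l' _ | l _ | n _ | n r l _ _].
- exact: rmulAD.
- exact: rmulADr.
- exact: rmulA0.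
- exact: rmulA0r.
- by rewrite /tensAx_act rmulA_comp.
Qed.

Lemma contractAD T T' : contractA (T + T') = contractA T + contractA T'.
Proof. exact: (tliftD contractA_balanced). Qed.

Lemma contractA_mul t a' : contractA (tm (TAx V) t a') = rmulA a' t.
Proof. exact: (tliftM contractA_balanced). Qed.

Lemma contractA0 : contractA 0 = 0.
Proof. exact: (tlift0 contractA_balanced). Qed.

Lemma contractAB T T' : contractA (T - T') = contractA T - contractA T'.
Proof. by apply/eqP; rewrite eq_sym subr_eq -contractAD subrK. Qed.

Lemma contractA_unitA T : contractA (mapA unitA T) = T.
Proof.
elim/tensA_ind: T => [|n l|t u IH1 IH2].
- by rewrite (mapA0 i x unitA_hom) contractA0.
- by rewrite (mapA_mul unitA_hom) contractA_mul /unitA rmulA_mul Defs.comp1l.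
- by rewrite (mapAD unitA_hom) contractAD IH1 IH2.
Qed.
End Complex.
Arguments unitA {V}.
Arguments amitsur {V}.
Arguments contractA {V}.

Lemma amitsur_homotopy (V : rmodule R) (T : TA (TAx V)) :
  T = mapA unitA (contractA T) - contractA (mapA amitsur T).
Proof.
have hu := unitA_hom V; have hd := amitsur_hom V.
have additive (T1 T2 : TA (TAx V)) :
    T1 = mapA unitA (contractA T1) - contractA (mapA amitsur T1) ->
    T2 = mapA unitA (contractA T2) - contractA (mapA amitsur T2) ->
    T1 + T2 = mapA unitA (contractA (T1 + T2)) - contractA (mapA amitsur (T1 + T2)).
  move=> {1}-> {1}->.
  by rewrite !(mapAD hd) !contractAD !(mapAD hu) opprD addrACA.
elim/tensA_ind: T => [|t a'|T1 T2]; last exact: additive.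
- by rewrite (mapA0 i x hd) !contractA0 (mapA0 i x hu) subrr.
elim/tensA_ind: t => [|n a|t u]; last by rewrite tensA_mulDl; exact: additive.
- by rewrite tensA_mul0l (mapA0 i x hd) !contractA0 (mapA0 i x hu) subrr.
rewrite contractA_mul rmulA_mul (mapA_mul hu) (mapA_mul hd).
rewrite /amitsur (mapA_mul hu) tensA_mulBl contractAB !contractA_mul.
by rewrite !rmulA_mul Defs.comp1l /unitA opprB addrC subrK.
Qed.

Definition amitsur_exact (V : rmodule R) : Prop :=
  injective (@unitA V) /\ forall t : TAx V, amitsur t = 0 <-> exists n, unitA n = t.

Section FaithfullyFlat.
Hypothesis hff : faithfully_flat_left la.

Lemma ff_injective (V W : rmodule R) (f : V -> W) : rmod_hom f ->
  (forall t : TA V, mapA f t = 0 -> t = 0) -> injective f.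
Proof.
move=> hf hker; apply: (klin_inj hf.1).
apply/(exact3_kernel (U:=V) (z:=fun _ => 0)) => //; first exact: hf.1.
apply/(hff (rmod_hom0 V V) hf).
apply/(@exact3_kernel _ (TA V) (TA V) (TA W) (mapA (fun _ : V => 0)) (mapA f)).
- exact: mapA_lin.
- exact: mapA_zero_fun.
- exact: hker.
Qed.

Lemma ff_amitsur_exact (V : rmodule R) : amitsur_exact V.
Proof.
split.
- apply: (ff_injective (unitA_hom V)) => t h.
  by rewrite -(contractA_unitA t) h contractA0.
- apply: (hff (unitA_hom V) (amitsur_hom V)).2 => T; split.
  + move=> hT; exists (contractA T).
    have {}hT : mapA amitsur T = 0 := hT.
    by rewrite {2}(amitsur_homotopy T) hT contractA0 subr0.
  + case=> S <-; change (mapA amitsur (mapA unitA S) = 0).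
    elim/tensA_ind: S => [|n l|t u IH1 IH2].
    * by rewrite (mapA0 i x (unitA_hom V)) (mapA0 i x (amitsur_hom V)).
    * by rewrite (mapA_mul (unitA_hom V)) (mapA_mul (amitsur_hom V)) amitsur_unitA tensA_mul0l.
    * by rewrite (mapAD (unitA_hom V)) (mapAD (amitsur_hom V)) IH1 IH2 addr0.
Qed.
End FaithfullyFlat.
End AmitsurComplex.
Arguments unitA {k X B A i x V}.
Arguments amitsur {k X B A i x V}.

Lemma unit_isoE (k : comPzRingType) (X : Type) (B : X -> kalg k) (A : kcat k X)
    (i : kXfunctor B A) (N : forall x, rmodule (B x)) :
  unit_iso i N <-> forall x, amitsur_exact i (N x).
Proof.
have GF_amitsur x (t : tensAx i (N x)) : GFpred _ _ _ _ i N x t <-> amitsur t = 0.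
  rewrite /amitsur; split=> [e | /eqP]; last by rewrite subr_eq0 => /eqP.
  by apply/eqP; rewrite subr_eq0; apply/eqP; exact: e.
by split=> hN x; have [inj im] := hN x; split=> // t; rewrite -im GF_amitsur.
Qed.

Record rsubmod_closed (k : comPzRingType) (R : kalg k) (V : rmodule R) (P : V -> Prop)
    : Prop := RsubmodClosed {
  rsubmod0 : P 0;
  rsubmodD : forall u v, P u -> P v -> P (u + v);
  rsubmodZ : forall c u, P u -> P (c *: u);
  rsubmod_act : forall u r, P u -> P (rma u r) }.

Definition rsub (k : comPzRingType) (R : kalg k) (V : rmodule R) (P : V -> Prop)
  of rsubmod_closed P : Type := {v : V | P v}.

Section Rsub.
Variables (k : comPzRingType) (R : kalg k) (V : rmodule R) (P : V -> Prop).
Hypothesis hP : rsubmod_closed P.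
Local Notation S := (rsub hP).

Definition rsubval (a : S) : V := proj1_sig a.

Lemma rsubval_inj : injective rsubval.
Proof.
case=> a ha [b hb] /= e; subst b.
by rewrite (proof_irrelevance _ ha hb).
Qed.

Lemma rsubvalP (a : S) : P (rsubval a). Proof. exact: proj2_sig a. Qed.

Definition rsub_add (a b : S) : S := exist _ _ (rsubmodD hP (rsubvalP a) (rsubvalP b)).
Definition rsub_zero : S := exist _ 0 (rsubmod0 hP).
Definition rsub_scale (c : k) (a : S) : S := exist _ _ (rsubmodZ hP c (rsubvalP a)).
Definition rsub_act (a : S) (r : R) : S := exist _ _ (rsubmod_act hP r (rsubvalP a)).

Lemma rsub_addA : associative rsub_add.
Proof. by move=> a b c; apply: rsubval_inj; rewrite /= addrA. Qed.
Lemma rsub_addC : commutative rsub_add.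
Proof. by move=> a b; apply: rsubval_inj; rewrite /= addrC. Qed.
Lemma rsub_add0 : left_id rsub_zero rsub_add.
Proof. by move=> a; apply: rsubval_inj; rewrite /= add0r. Qed.
Lemma rsub_addN : left_inverse rsub_zero (rsub_scale (-1)) rsub_add.
Proof. by move=> a; apply: rsubval_inj; rewrite /= scaleN1r addNr. Qed.
Lemma rsub_scaleA a b v : rsub_scale a (rsub_scale b v) = rsub_scale (a * b) v.
Proof. by apply: rsubval_inj; rewrite /= scalerA. Qed.
Lemma rsub_scale1 : left_id 1 rsub_scale.
Proof. by move=> a; apply: rsubval_inj; rewrite /= scale1r. Qed.
Lemma rsub_scaleDr : right_distributive rsub_scale rsub_add.
Proof. by move=> a u v; apply: rsubval_inj; rewrite /= scalerDr. Qed.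
Lemma rsub_scaleDl v a b : rsub_scale (a + b) v = rsub_add (rsub_scale a v) (rsub_scale b v).
Proof. by apply: rsubval_inj; rewrite /= scalerDl. Qed.
End Rsub.

HB.instance Definition _ (k : comPzRingType) (R : kalg k) (V : rmodule R) (P : V -> Prop)
  (hP : rsubmod_closed P) := gen_eqMixin (rsub hP).
HB.instance Definition _ (k : comPzRingType) (R : kalg k) (V : rmodule R) (P : V -> Prop)
  (hP : rsubmod_closed P) := gen_choiceMixin (rsub hP).
HB.instance Definition _ (k : comPzRingType) (R : kalg k) (V : rmodule R) (P : V -> Prop)
  (hP : rsubmod_closed P) := GRing.isZmodule.Build (rsub hP)
  (@rsub_addA k R V P hP) (@rsub_addC k R V P hP) (@rsub_add0 k R V P hP)
  (@rsub_addN k R V P hP).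
HB.instance Definition _ (k : comPzRingType) (R : kalg k) (V : rmodule R) (P : V -> Prop)
  (hP : rsubmod_closed P) := GRing.Zmodule_isLmodule.Build k (rsub hP)
  (@rsub_scaleA k R V P hP) (@rsub_scale1 k R V P hP) (@rsub_scaleDr k R V P hP)
  (fun v a b => @rsub_scaleDl k R V P hP v a b).

Section Rsubmod.
Variables (k : comPzRingType) (R : kalg k) (V : rmodule R) (P : V -> Prop).
Hypothesis hP : rsubmod_closed P.

Lemma rsub_act_linl r : klinear (fun a : rsub hP => rsub_act a r).
Proof. by move=> c a b; apply: rsubval_inj; rewrite /= (@rma_linl _ _ V). Qed.
Lemma rsub_act_linr (a : rsub hP) : klinear (rsub_act a).
Proof. by move=> c r s; apply: rsubval_inj; rewrite /= (@rma_linr _ _ V). Qed.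
Lemma rsub_actA (a : rsub hP) r s : rsub_act (rsub_act a r) s = rsub_act a (amul r s).
Proof. by apply: rsubval_inj; rewrite /= rmaA. Qed.
Lemma rsub_act1 (a : rsub hP) : rsub_act a (aone R) = a.
Proof. by apply: rsubval_inj; rewrite /= rma1. Qed.

Definition rsubmod : rmodule R :=
  RModule rsub_act_linl rsub_act_linr rsub_actA rsub_act1.

Lemma rsubval_hom : rmod_hom (N:=rsubmod) (N':=V) (@rsubval k R V P hP).
Proof. by split. Qed.

Definition insubm (v : V) : rsubmod :=
  if excluded_middle_informative (P v) is left h then exist _ v h else 0.

Lemma insubmK v : P v -> rsubval (insubm v) = v.
Proof. by rewrite /insubm; case: excluded_middle_informative. Qed.
End Rsubmod.

Section Flat.
Variables (k : comPzRingType) (X : Type) (B : X -> kalg k) (A : kcat k X).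
Variables (i : kXfunctor B A) (x y : X).
Local Notation R := (B x).
Local Notation TA V := (tensA i V y).
Hypothesis hfl : flat_left (ila i x y).

Lemma flat_mapA_exact (V1 V2 V3 : rmodule R) (f : V1 -> V2) (g : V2 -> V3) :
  rmod_hom f -> rmod_hom g -> (forall v, g v = 0 <-> exists u, f u = v) ->
  forall T : TA V2, mapA g T = 0 <-> exists S : TA V1, mapA f S = T.
Proof. by move=> hf hg h; apply: (hfl hf hg). Qed.

Lemma flat_injective (V W : rmodule R) (f : V -> W) :
  rmod_hom f -> injective f -> injective (mapA f : TA V -> TA W).
Proof.
move=> hf finj; apply: (klin_inj (mapA_lin hf)).
apply/(@exact3_kernel _ (TA V) (TA V) (TA W) (mapA (fun _ : V => 0)) (mapA f)).
- exact: mapA_lin.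
- exact: mapA_zero_fun.
apply: (hfl (rmod_hom0 V V) hf).
apply/(exact3_kernel (U:=V) (z:=fun _ => 0)) => //; first exact: hf.1.
exact: klin_inj0 hf.1 finj.
Qed.
End Flat.

Section Counit.
Variables (k : comPzRingType) (X : Type) (B : X -> kalg k) (A : kcat k X).
Variables (i : kXfunctor B A) (M : rAmodule A).
Variable sigma : forall x y : X, Mc M x y -> tensor (tdM i M x y).
Hypothesis Hd : is_descent i M sigma.
Variable x : X.
Local Notation R := (B x).

Lemma Mdiag_linr (m : Mc M x x) : klinear (fun r : R => Ma m (ifun i r)).
Proof. by move=> c r s; rewrite (@ifun_lin _ _ _ _ i x) Ma_linr. Qed.

Lemma Mdiag_actA (m : Mc M x x) r s :
  Ma (Ma m (ifun i r)) (ifun i s) = Ma m (ifun i (amul r s)).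
Proof. by rewrite MaA ifun_mul. Qed.

Lemma Mdiag_act1 (m : Mc M x x) : Ma m (ifun i (aone R)) = m.
Proof. by rewrite ifun_one Ma1. Qed.

Definition Mdiag : rmodule R :=
  RModule (fun r => Ma_linl (ifun i r)) Mdiag_linr Mdiag_actA Mdiag_act1.

Local Notation TA y := (tensA i Mdiag y).
Local Notation tm y n l := (@tmul _ (tdRL Mdiag (ila i x y)) n l : TA y).

Definition sig y (m : Mc M x y) : TA y := @sigma x y m.

Lemma sig_lin y : klinear (@sig y).
Proof. by case: Hd => h _ _ _ c m m'; exact: h. Qed.

Lemma sig_act y z (m : Mc M x y) (a : Defs.Hom A y z) : sig (Ma m a) = rmulA a (sig m).
Proof. by case: Hd => _ h _ _; exact: h. Qed.

Lemma sig_hom : rmod_hom (N:=Mdiag) (N':=tensAx i Mdiag) (@sig x).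
Proof. by split; [exact: sig_lin | move=> n r; exact: sig_act]. Qed.

Lemma sig_coassoc y (m : Mc M x y) :
  mapA (@sig x : Mdiag -> tensAx i Mdiag) (sig m) = mapA unitA (sig m).
Proof. by case: Hd => _ _ h _; exact: h. Qed.

Lemma sig_counit y (m : Mc M x y) :
  tlift (D:=tdRL Mdiag (ila i x y)) (Z:=of_lmod (Mc M x y)) (fun m0 a => Ma m0 a) (sig m)
  = m.
Proof. by case: Hd => _ _ _ h; exact: h. Qed.

Definition Gpred_x (m : Mdiag) : Prop := Gpred k X B A i M sigma x m.

Lemma Gpred_xE m : Gpred_x m <-> sig m = tm x m (idm A x).
Proof. by []. Qed.

Lemma Gpred_closed : rsubmod_closed Gpred_x.
Proof.
split.
- by apply/Gpred_xE; rewrite (klin0 (@sig_lin x)) tensA_mul0l.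
- move=> u v /Gpred_xE hu /Gpred_xE hv; apply/Gpred_xE.
  by rewrite (klinD (@sig_lin x)) hu hv tensA_mulDl.
- by move=> c u /Gpred_xE hu; apply/Gpred_xE; rewrite (klinZ (@sig_lin x)) hu tensA_mulZl.
- move=> u r /Gpred_xE hu; apply/Gpred_xE; rewrite /= sig_act hu rmulA_mul.
  by rewrite tensA_bal ilaE Defs.comp1l Defs.comp1r.
Qed.

Definition Gmod : rmodule R := rsubmod Gpred_closed.
Definition Gval : Gmod -> Mdiag := @rsubval _ _ _ _ Gpred_closed.

Definition dsig (m : Mdiag) : tensAx i Mdiag := sig m - unitA m.

Lemma dsig_hom : rmod_hom dsig.
Proof. exact: (rmod_hom_sub sig_hom (unitA_hom i Mdiag)). Qed.

Lemma Gval_exact (v : Mdiag) : dsig v = 0 <-> exists u : Gmod, Gval u = v.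
Proof.
split=> [h | [u <-]].
- exists (insubm Gpred_closed v); apply: insubmK; apply/Gpred_xE.
  by apply/eqP; rewrite -subr_eq0; apply/eqP.
- by rewrite /dsig (Gpred_xE _).1 ?subrr //; exact: rsubvalP.
Qed.

Section CounitBijective.
Variable y : X.
Hypothesis hfl : flat_left (ila i x y).
Local Notation la := (ila i x y).
Local Notation DF := (tdFG k X B A i M sigma x y).
Local Notation TF := (tensor DF).
Local Notation TG := (tensA i Gmod y).

Definition tdMA (P : Mdiag -> Prop) : tdata k :=
  @TData k (of_lmod Mdiag) (of_lmod (Defs.Hom A x y)) R (fun m r => Ma m (ifun i r)) la P.

Lemma act_balanced (P : Mdiag -> Prop) :
  balanced (D:=tdMA P) (V:=Mc M x y) (fun (m : Mdiag) (a : Defs.Hom A x y) => Ma m a).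
Proof.
split=> /= [n n' l _ _ | n l l' _ | l _ | n _ | n r l _ _].
- exact: (klinD (Ma_linl l)).
- exact: (klinD (Ma_linr n)).
- exact: (klin0 (Ma_linl l)).
- exact: (klin0 (Ma_linr n)).
- exact: MaA.
Qed.

Definition mulM (t : TA y) : Mc M x y :=
  tlift (D:=tdRL Mdiag la) (Z:=of_lmod (Mc M x y)) (fun m a => Ma m a) t.
Definition inclG (S : TG) : TA y := mapA Gval S.
(* [TF] presents G(M)_x (x)_{B_x} A_xy by elements of M_xx satisfying [Gpred];
   [toFG] and [ofFG] identify it with [tensA i Gmod y]. *)
Definition toFG (S : TG) : TF := tmap (D:=tdRL Gmod la) (D':=DF) Gval id S.
Definition ofFG (t : TF) : TG := tmap (D:=DF) (D':=tdRL Gmod la) (insubm Gpred_closed) id t.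
Definition forgetFG (t : TF) : TA y := tmap (D:=DF) (D':=tdRL Mdiag la) id id t.
Local Notation cnt := (counit k X B A i M sigma x y).

Lemma toFG_compat : tmap_compat (D:=tdRL Gmod la) (D':=DF) id Gval id.
Proof. by split=> // n _; exact: rsubvalP. Qed.

Lemma ofFG_compat : tmap_compat (D:=DF) (D':=tdRL Gmod la) id (insubm Gpred_closed) id.
Proof.
split=> //.
- move=> n n' hn hn'; apply: rsubval_inj; rewrite /= !insubmK //.
  exact: (rsubmodD Gpred_closed).
- by move=> h0; apply: rsubval_inj; rewrite insubmK.
- by move=> n r hn hnr; apply: rsubval_inj; rewrite insubmK //= insubmK.
Qed.

Lemma forgetFG_compat : tmap_compat (D:=DF) (D':=tdRL Mdiag la) id id id.
Proof. by split. Qed.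

Lemma Gval_hom : rmod_hom (N:=Gmod) (N':=Mdiag) Gval.
Proof. exact: rsubval_hom. Qed.

Lemma counit_toFG S : cnt (toFG S) = mulM (inclG S).
Proof.
have bG : balanced (D:=DF) (fun m a => Ma m a) := act_balanced Gpred_x.
have bM : balanced (D:=tdRL Mdiag la) (fun m a => Ma m a) := act_balanced (fun _ => True).
elim/tensA_ind: S => [|n l|t u IH1 IH2].
- rewrite /counit /mulM /toFG /inclG (mapA0 i y Gval_hom) (tmap0 toFG_compat).
  by rewrite (tlift0 bG) (tlift0 bM).
- rewrite /toFG /inclG (mapA_mul Gval_hom) (tmapM toFG_compat) //.
  by rewrite /counit /mulM (tliftM bG _ (rsubvalP n)) (tliftM bM).
- rewrite /toFG /inclG (mapAD Gval_hom) -/(tadd t u) (tmapD toFG_compat).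
  by rewrite /counit /mulM (tliftD bG) (tliftD bM); congr (_ + _).
Qed.

Lemma sig_counit_FG t : sig (cnt t) = forgetFG t.
Proof.
have bG : balanced (D:=DF) (fun m a => Ma m a) := act_balanced Gpred_x.
elim/tensor_ind: t => [|n l hn|t u IH1 IH2].
- by rewrite /counit /forgetFG (tmap0 forgetFG_compat) (tlift0 bG) (klin0 (@sig_lin y)).
- rewrite /counit /forgetFG (tmapM forgetFG_compat) // (tliftM bG) // sig_act.
  by move/Gpred_xE: hn => ->; rewrite rmulA_mul Defs.comp1l.
- rewrite /counit /forgetFG (tmapD forgetFG_compat) (tliftD bG) (klinD (@sig_lin y)).
  by congr (_ + _).
Qed.

Lemma forgetFG_ofFG t : forgetFG t = inclG (ofFG t).
Proof.
elim/tensor_ind: t => [|n l hn|t u IH1 IH2].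
- rewrite /forgetFG /inclG /ofFG (tmap0 forgetFG_compat) (tmap0 ofFG_compat).
  by rewrite (mapA0 i y Gval_hom).
- rewrite /forgetFG /inclG /ofFG (tmapM forgetFG_compat) // (tmapM ofFG_compat) //.
  by rewrite (mapA_mul Gval_hom) /Gval insubmK.
- rewrite /forgetFG (tmapD forgetFG_compat) -/(forgetFG t) -/(forgetFG u) IH1 IH2.
  rewrite /ofFG (tmapD ofFG_compat) -/(ofFG t) -/(ofFG u).
  exact: (esym (mapAD Gval_hom (ofFG t) (ofFG u))).
Qed.

Lemma toFG_ofFG t : toFG (ofFG t) = t.
Proof.
elim/tensor_ind: t => [|n l hn|t u IH1 IH2].
- by rewrite /toFG /ofFG (tmap0 ofFG_compat) (tmap0 toFG_compat).
- by rewrite /toFG /ofFG (tmapM ofFG_compat) // (tmapM toFG_compat) // /Gval insubmK.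
- rewrite /ofFG (tmapD ofFG_compat) -/(ofFG t) -/(ofFG u) /toFG (tmapD toFG_compat).
  by rewrite -/(toFG (ofFG t)) -/(toFG (ofFG u)) IH1 IH2.
Qed.

Lemma inclG_inj : injective inclG.
Proof. exact: (flat_injective hfl Gval_hom (@rsubval_inj _ _ _ _ Gpred_closed)). Qed.

(* sigma_xy(m) lies in G_x (x) A_xy by the coassociativity (ii) and flatness of A_xy *)
Lemma sig_in_inclG (m : Mc M x y) : exists S : TG, inclG S = sig m.
Proof.
apply/(flat_mapA_exact hfl Gval_hom dsig_hom Gval_exact).
by rewrite /dsig (mapA_sub sig_hom (unitA_hom i Mdiag)) sig_coassoc subrr.
Qed.

Lemma counit_bijective : bijective cnt.
Proof.
pose inv (m : Mc M x y) : TF := toFG (proj1_sig (cid (sig_in_inclG m))).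
exists inv => [t | m]; rewrite /inv; case: cid => S /= hS.
- suff -> : S = ofFG t by rewrite toFG_ofFG.
  by apply: inclG_inj; rewrite hS sig_counit_FG forgetFG_ofFG.
- by rewrite counit_toFG hS; exact: sig_counit.
Qed.
End CounitBijective.
End Counit.

Lemma flat_counit_iso (k : comPzRingType) (X : Type) (B : X -> kalg k) (A : kcat k X)
    (i : kXfunctor B A) (M : rAmodule A)
    (sigma : forall x y : X, Mc M x y -> tensor (tdM i M x y)) :
  (forall x y, flat_left (ila i x y)) -> is_descent i M sigma -> counit_iso i M sigma.
Proof. by move=> Hflat Hd x y; exact: (counit_bijective Hd (Hflat x y)). Qed.

Section Image.
Variables (k : comPzRingType) (R : kalg k) (V W : rmodule R) (f : V -> W).
Hypothesis hf : rmod_hom f.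

Lemma image_closed : rsubmod_closed (fun w => exists u, f u = w).
Proof.
case: hf => hl hr; split.
- by exists 0; rewrite (klin0 hl).
- by move=> _ _ [u <-] [v <-]; exists (u + v); rewrite (klinD hl).
- by move=> c _ [u <-]; exists (c *: u); rewrite (klinZ hl).
- by move=> _ r [u <-]; exists (rma u r); rewrite hr.
Qed.

Definition image_mod : rmodule R := rsubmod image_closed.

Definition corestr (u : V) : image_mod := insubm image_closed (f u).

Lemma corestrK u : rsubval (corestr u) = f u.
Proof. by rewrite /corestr insubmK //; exists u. Qed.

Lemma corestr_hom : rmod_hom (N:=V) (N':=image_mod) corestr.
Proof.
case: hf => hl hr; split=> [c u v | n r]; apply: rsubval_inj.
- by rewrite /= !corestrK hl.
- by rewrite /= !corestrK hr.
Qed.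
End Image.

Definition regmod (k : comPzRingType) (R : kalg k) : rmodule R :=
  RModule (@amul_linl k R) (@amul_linr k R) (fun m r s => esym (amulA m r s)) (@amul1r k R).

Section UnitIsoFaithfullyFlat.
Variables (k : comPzRingType) (X : Type) (B : X -> kalg k) (A : kcat k X).
Variable i : kXfunctor B A.

(* [unit_iso] quantifies over families; this puts a single module into one. *)
Definition extend_family x (V : rmodule (B x)) : forall y, rmodule (B y) :=
  fun y => if excluded_middle_informative (x = y) is left e
           then eq_rect x (fun z => rmodule (B z)) V y e
           else regmod (B y).

Lemma extend_family_at x (V : rmodule (B x)) : extend_family V x = V.
Proof.
rewrite /extend_family; case: excluded_middle_informative => // e.
by rewrite (proof_irrelevance _ e erefl).
Qed.

Lemma unit_iso_amitsur_exact :
  (forall N, unit_iso i N) -> forall x (V : rmodule (B x)), amitsur_exact i V.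
Proof.
move=> Hu x V; have /unit_isoE/(_ x) := Hu (extend_family V).
by rewrite extend_family_at.
Qed.

Variable x : X.
Local Notation R := (B x).
Local Notation TA V := (tensA i V x).
Local Notation TAx V := (tensAx i V).

Lemma mapA_amitsur (V W : rmodule R) (j : V -> W) (hj : rmod_hom j) (t : TAx V) :
  mapA (mapA j : TAx V -> TAx W) (amitsur t) = amitsur (mapA j t).
Proof.
have hjA := mapA_hom i hj.
elim/tensA_ind: t => [|n l|t u IH1 IH2].
- by rewrite (mapA0 i x hj) !(klin0 (amitsur_hom i _).1) (mapA0 i x hjA).
- rewrite /amitsur (klinB (mapA_lin hjA)) (mapA_mul hj) !(mapA_mul (unitA_hom i _)).
  by rewrite (mapA_mul hjA) [X in _ - X](mapA_mul hjA) /unitA !(mapA_mul hj).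
- rewrite (klinD (amitsur_hom i V).1) (mapAD hjA) IH1 IH2 (mapAD hj).
  by rewrite (klinD (amitsur_hom i W).1).
Qed.

Hypothesis Hflat : flat_left (ila i x x).
Hypothesis hex : forall V : rmodule R, amitsur_exact i V.

Lemma unitA_descend (V W : rmodule R) (j : V -> W) (S : TA V) (w : W) :
  rmod_hom j -> injective j -> mapA j S = unitA w -> exists v, j v = w.
Proof.
move=> hj jinj e; have [_ imV] := hex V; have [injW _] := hex W.
(* [amitsur S] vanishes since its image under the injection [mapA (mapA j)] does. *)
have : amitsur S = 0.
  apply: (flat_injective Hflat (mapA_hom i hj) (flat_injective Hflat hj jinj)).
  by rewrite (mapA_amitsur hj) e amitsur_unitA (mapA0 i x (mapA_hom i hj)).
case/imV => v hv; exists v; apply: injW.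
by rewrite -e -hv /unitA (mapA_mul hj).
Qed.

Lemma unit_iso_faithfully_flat : faithfully_flat_left (ila i x x).
Proof.
move=> N1 N2 N3 f g hf hg; split; first exact: Hflat.
move=> hT v; split=> [gv0 | [u <-]].
- have : mapA g (unitA v : TA N2) = (0 : TA N3) by rewrite /unitA (mapA_mul hg) gv0 tensA_mul0l.
  case/(hT (unitA v)) => S hS.
  have hc := corestr_hom hf.
  pose j : image_mod hf -> N2 := @rsubval _ _ _ _ (image_closed hf).
  have hj : rmod_hom j := rsubval_hom (image_closed hf).
  have e : mapA j (mapA (corestr hf) S) = unitA v.
    rewrite (mapA_comp hc hj) -[RHS]hS; apply: eq_mapA => //.
    - exact: rmod_hom_comp hc hj.
    - exact: corestrK.
  have [w <-] := unitA_descend hj (@rsubval_inj _ _ _ _ (image_closed hf)) e.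
  exact: rsubvalP w.
- have [injN3 _] := hex N3; apply: injN3.
  have := (hT (mapA f (unitA u : TA N1))).2 (ex_intro _ _ erefl).
  change (mapA g (mapA f (unitA u : TA N1)) = 0 -> unitA (g (f u)) = unitA 0 :> TA N3).
  by rewrite /unitA (mapA_mul hf) (mapA_mul hg) tensA_mul0l.
Qed.
End UnitIsoFaithfullyFlat.

Theorem theorem2p5 (k : comPzRingType) (X : Type) (B : X -> kalg k)
  (A : kcat k X) (i : kXfunctor B A)
  (Hflat : forall x y : X, flat_left (ila i x y)) :
  (forall x : X, faithfully_flat_left (ila i x x)) <->
  ((forall N : forall x : X, rmodule (B x), unit_iso i N) /\
   (forall (M : rAmodule A) (sigma : forall x y : X, Mc M x y -> tensor (tdM i M x y)),
      is_descent i M sigma -> counit_iso i M sigma)).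
Proof.
split=> [hff | [Hu _] x].
- split=> [N | M sigma]; last exact: flat_counit_iso Hflat.
  by apply/unit_isoE => x; exact: ff_amitsur_exact (hff x) (N x).
  apply: (unit_iso_faithfully_flat (Hflat x x)); exact: unit_iso_amitsur_exact Hu x.
Qed.
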